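(* For all $i\in I_d$, the element $\hat x_i^l$ of $\mathcal{S}^f_d$ lies in $F_{l-1}\mathcal{S}^f_d$, and its image $\operatorname{gr}_{l-1}\hat x_i^l$ in $F_{l-1}\mathcal{S}^f_d/F_{l-2}\mathcal{S}^f_d\subseteq\operatorname{gr}\mathcal{S}^f_d$ equals $y_i(l)=\sum_{j=1}^{i-1}(i,j)^{(0)}$.
   Context: Fix a commutative ring $R$ and integers $l,d\ge1$; $I_a=\{1,\dots,a\}$. $\mathcal{S}_d$ is the superalgebra over $R$ generated by even $\hat s_1,\dots,\hat s_{d-1}$, $\hat x_1,\dots,\hat x_d$ and odd $\hat c_1,\dots,\hat c_d$ with relations: the $\hat s_i$ satisfy the Coxeter relations of $\Sigma_d$; the $\hat x_i$ commute; $\hat c_i^2=1$, $\hat c_i\hat c_j=-\hat c_j\hat c_i$ ($i\neq j$); $\hat x_i\hat c_i=-\hat c_i\hat x_i$, $\hat x_i\hat c_j=\hat c_j\hat x_i$ ($j\ne i$); $\hat s_i\hat c_i=\hat c_{i+1}\hat s_i$, $\hat s_i\hat c_j=\hat c_j\hat s_i$ ($j\ne i,i+1$); $\hat s_i\hat x_i=\hat x_{i+1}\hat s_i-1-\hat c_i\hat c_{i+1}$, $\hat s_i\hat x_j=\hat x_j\hat s_i$ ($j\ne i,i+1$). Let $f(x)=x^l+b_{l-2}x^{l-2}+b_{l-4}x^{l-4}+\cdots\in R[x]$ (monic of degree $l$, all terms of the same parity as $l$), and $\mathcal{S}^f_d=\mathcal{S}_d/(f(\hat x_1))$. $F_k\mathcal{S}^f_d$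 is the span of products of generators with at most $k$ polynomial generators $\hat x_j$. The associated graded $\operatorname{gr}\mathcal{S}^f_d$ is identified (via $\hat x_i\mapsto x_i$, $\hat s_i\mapsto(i,i+1)$, $\hat c_i\mapsto c_i$) with the $R$-superalgebra $\mathcal{G}$ free on $\{x_1^{m_1}\cdots x_d^{m_d}wc_1^{e_1}\cdots c_d^{e_d}:0\le m_i\le l-1, w\in\Sigma_d, e_i\in\{0,1\}\}$ with: $x_i$ commuting, $x_i^l=0$; $\Sigma_d$ multiplied as a group (composition right to left); $c_i^2=1$, $c_ic_j=-c_jc_i$; $wx_i=x_{w(i)}w$, $wc_i=c_{w(i)}w$; $x_ic_i=-c_ix_i$, $x_ic_j=c_jx_i$ ($i\neq j$); $\operatorname{gr}_k$ denotes the map $F_k\to F_k/F_{k-1}$. For an ordered tuple $A=(i_1,\dots,i_a)$ of distinct elements of $I_d$, $\sigma_A$ is the cycle $i_1\mapsto\dots\mapsto i_a\mapsto i_1$. For $\alpha\in\mathbb{Z}_2^a$: $|\alpha|=\sum\alpha_j$; $\mathbb{Z}_2^{a,\mathrm{ev}}$ the $\alpha$ with $|\alpha|$ even; $c_\alpha(A)=c_{i_1}^{\alpha_1}\cdots c_{i_a}^{\alpha_a}$; $\epsilon^\alpha_j=\prod_{k<j}(-1)^{\alpha_k}$; $h^\alpha_r(A)=\sum_{r_1+\dots+r_a=(a-1)(l-1)+r,\,r_j\ge0}\prod_j(\epsilon^\alpha_jx_{i_j})^{r_j}$; $A^{(r,\alpha)}=h^\alpha_r(A)\sigma_Ac_\alpha(A)$;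 $\tau_\alpha=(-1)^{|\alpha|/2+\sum_j j\alpha_j}$; $A^{(r)}=\sum_{\alpha\in\mathbb{Z}_2^{a,\mathrm{ev}}}\tau_\alpha A^{(r,\alpha)}$. In particular $(i,j)^{(0)}$ is $A^{(0)}$ for $A=(i,j)$. *)

From HB Require Import structures.
From mathcomp Require Import all_boot all_order all_algebra.
Set Implicit Arguments. Unset Strict Implicit. Unset Printing Implicit Defensive.
Import GRing.Theory.
Local Open Scope ring_scope.

(* Letters of the generating set of S_d (1-based indices as in the paper):
   GS i = \hat s_i, GX i = \hat x_i, GC i = \hat c_i. *)
Inductive gen := GS of nat | GX of nat | GC of nat.

Definition gen_ok (d : nat) (g : gen) : bool :=
  match g with
  | GS i => (1 <= i < d)%N
  | GX i => (1 <= i <= d)%N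
  | GC i => (1 <= i <= d)%N
  end.

Definition isX (g : gen) : bool := if g is GX _ then true else false.

Definition nX (w : seq gen) : nat := count isX w.

Section InAlgebra.
Variables (R : comPzRingType) (A : algType R) (s x c : nat -> A).

Definition evalg (g : gen) : A :=
  match g with GS i => s i | GX i => x i | GC i => c i end.

Definition evalw (w : seq gen) : A := \prod_(g <- w) evalg g.

Definition inSpan (d : nat) (P : seq gen -> bool) (v : A) : Prop :=
  exists ws : seq (R * seq gen),
    all (fun p => all (gen_ok d) p.2 && P p.2) ws /\
    v = \sum_(p <- ws) p.1 *: evalw p.2.

Definition inF (d k : nat) (v : A) : Prop := inSpan d (fun w => nX w <= k)%N v.

(* The defining relations of S^f_d, with f(x) = x^l + sum_{k<l} b_k x^k. *)
Definition Sf_rels (l d : nat) (b : nat -> R) : Prop :=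
  (
      (forall i, (1 <= i < d)%N -> s i * s i = 1) /\
      (forall i, (1 <= i)%N -> (i.+1 < d)%N ->
         s i * s i.+1 * s i = s i.+1 * s i * s i.+1) /\
      (forall i j, (1 <= i < d)%N -> (1 <= j < d)%N -> (i.+1 < j)%N ->
         s i * s j = s j * s i) /\
      (forall i j, (1 <= i <= d)%N -> (1 <= j <= d)%N -> x i * x j = x j * x i) /\
      (forall i, (1 <= i <= d)%N -> c i * c i = 1) /\
      (forall i j, (1 <= i <= d)%N -> (1 <= j <= d)%N -> i != j ->
         c i * c j = - (c j * c i)) /\
      ( (forall i, (1 <= i <= d)%N -> x i * c i = - (c i * x i)) /\
          (forall i j, (1 <= i <= d)%N -> (1 <= j <= d)%N -> i != j ->
             x i * c j = c j * x i) /\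
          (forall i, (1 <= i < d)%N -> s i * c i = c i.+1 * s i) /\
          (forall i j, (1 <= i < d)%N -> (1 <= j <= d)%N -> j != i -> j != i.+1 ->
             s i * c j = c j * s i) /\
          (forall i, (1 <= i < d)%N ->
             s i * x i = x i.+1 * s i - 1 - c i * c i.+1) /\
          (forall i j, (1 <= i < d)%N -> (1 <= j <= d)%N -> j != i -> j != i.+1 ->
             s i * x j = x j * s i) /\
          x 1 ^+ l + \sum_(k < l) b k *: x 1 ^+ k = 0 )).

(* The image of
   a permutation is computed from an explicit word in the \hat s_i; since the
   \hat s_i satisfy the Coxeter relations, this is the image of the
   permutation under the homomorphism Sigma_d -> S^f_d, independent of the
   word. *)

(* transposition (p q), p < q : s_p s_{p+1} ... s_{q-1} ... s_{p+1} s_p *)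
Definition tw (p q : nat) : A :=
  (\prod_(k <- iota p (q - p)) s k) * (\prod_(k <- rev (iota p (q.-1 - p))) s k).

Definition tr (p q : nat) : A :=
  if (p < q)%N then tw p q else if (q < p)%N then tw q p else 1.

(* sigma_A for A = (i_1,...,i_a): equals (i_1 i_2)(i_2 i_3)...(i_{a-1} i_a) *)
Definition cycA (As : seq nat) : A :=
  \prod_(j < (size As).-1) tr (nth 0%N As j) (nth 0%N As j.+1).

Definition calpha (As : seq nat) (al : {ffun 'I_(size As) -> bool}) : A :=
  \prod_(j < size As) (if al j then c (nth 0%N As j) else 1).

(* epsilon^alpha_j  (0-based j, i.e. product over earlier positions) *)
Definition epsA (As : seq nat) (al : {ffun 'I_(size As) -> bool}) (j : 'I_(size As)) : A :=
  (-1) ^+ (\sum_(k < size As | (k < j)%N) (al k : nat))%N.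

Definition hterm (l : nat) (As : seq nat) (al : {ffun 'I_(size As) -> bool}) (r : nat) : A :=
  let N := ((size As).-1 * l.-1 + r)%N in
  \sum_(rs : {ffun 'I_(size As) -> 'I_N.+1} | (\sum_(j < size As) (rs j : nat))%N == N)
    \prod_(j < size As) (epsA al j * x (nth 0%N As j)) ^+ rs j.

Definition absal (As : seq nat) (al : {ffun 'I_(size As) -> bool}) : nat :=
  (\sum_(j < size As) (al j : nat))%N.

(* tau_alpha = (-1)^(|alpha|/2 + sum_j j alpha_j), j 1-based *)
Definition tau (As : seq nat) (al : {ffun 'I_(size As) -> bool}) : A :=
  (-1) ^+ ((absal al)./2 + \sum_(j < size As) (j.+1 * al j))%N.

Definition Ar (l : nat) (As : seq nat) (r : nat) : A :=
  \sum_(al : {ffun 'I_(size As) -> bool} | ~~ odd (absal al))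
    tau al * (hterm l al r * cycA As * calpha al).

Definition y (l i : nat) : A := \sum_(1 <= j < i) Ar l [:: i; j] 0.

End InAlgebra.

(* The relation s_i x_i = x_{i+1} s_i - 1 - c_i c_{i+1}
   gives x_{i+1} = s_i x_i s_i + (1 + c_i c_{i+1}) s_i, a term of degree one plus a term
   of degree zero.  In the l-th power of this sum, the products with two or more
   degree-zero factors lie in F_{l-2}; the product with none is s_i x_i^l s_i, and the
   l products with exactly one add up to (i+1,i)^(0) modulo F_{l-2}.  Since conjugation
   by s_i turns (i,j)^(0) into (i+1,j)^(0) modulo F_{l-2}, induction on i shows
   x_i^l = y_i(l) modulo F_{l-2}.  The induction starts from
   x_1^l = -(b_{l-2} x_1^{l-2} + ...), which lies in F_{l-2} because all terms of f
   have the parity of l. *)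

From HB Require Import structures.
From mathcomp Require Import all_boot all_order all_algebra.
From mathcomp Require Import zify.
Import GRing.Theory.
Local Open Scope ring_scope.
Set Implicit Arguments. Unset Strict Implicit.

Definition ffun2 (J : Type) (a b : J) : {ffun 'I_2 -> J} :=
  [ffun k : 'I_2 => if val k == 0%N then a else b].

Lemma sum_ffun2 (J : finType) (V : nmodType) (P : pred {ffun 'I_2 -> J})
    (G : {ffun 'I_2 -> J} -> V) :
  \sum_(f | P f) G f = \sum_(a : J) \sum_(b : J | P (ffun2 a b)) G (ffun2 a b).
Proof.
rewrite pair_big_dep (reindex (fun p : J * J => ffun2 p.1 p.2)) /=.
  by apply: eq_bigl => p.
exists (fun f => (f ord0, f ord_max)) => [[a b] _|f _]; first by rewrite !ffunE.
by apply/ffunP => -[[|[|k]] hk]; rewrite ffunE //=; congr (f _); apply: val_inj.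
Qed.

Lemma sum_ffun2_bool (V : nmodType) (P : pred {ffun 'I_2 -> bool})
    (G : {ffun 'I_2 -> bool} -> V) :
  \sum_(f | P f) G f =
    ((if P (ffun2 true true) then G (ffun2 true true) else 0) +
     (if P (ffun2 true false) then G (ffun2 true false) else 0)) +
    ((if P (ffun2 false true) then G (ffun2 false true) else 0) +
     (if P (ffun2 false false) then G (ffun2 false false) else 0)).
Proof. by rewrite sum_ffun2 big_bool big_mkcond big_bool big_mkcond big_bool. Qed.

Section Filtration.
Variables (R : comPzRingType) (A : algType R) (s x c : nat -> A) (d : nat).

Local Notation span := (inSpan s x c d).
Local Notation F := (inF s x c d).

Lemma evalw_cat w1 w2 : evalw s x c (w1 ++ w2) = evalw s x c w1 * evalw s x c w2.
Proof. by rewrite /evalw big_cat. Qed.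

Lemma span0 P : span P 0.
Proof. by exists [::]; rewrite big_nil. Qed.

Lemma spanD P u v : span P u -> span P v -> span P (u + v).
Proof.
move=> [wu [hu ->]] [wv [hv ->]]; exists (wu ++ wv).
by rewrite all_cat hu hv big_cat.
Qed.

Lemma spanZ P a v : span P v -> span P (a *: v).
Proof.
move=> [w [hw ->]]; exists [seq (a * p.1, p.2) | p <- w]; rewrite all_map.
by split=> //; rewrite big_map scaler_sumr; apply: eq_bigr => p _; rewrite scalerA.
Qed.

Lemma spanN P v : span P v -> span P (- v).
Proof. by rewrite -scaleN1r; apply: spanZ. Qed.

Lemma span_sum (I : Type) (r : seq I) (Q : pred I) (G : I -> A) P :
  (forall i, Q i -> span P (G i)) -> span P (\sum_(i <- r | Q i) G i).
Proof. by move=> hG; apply: big_rec => [|i v /hG]; [apply: span0 | apply: spanD]. Qed.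

Lemma span_sum_nat m n (G : nat -> A) P :
  (forall i, (m <= i < n)%N -> span P (G i)) -> span P (\sum_(m <= i < n) G i).
Proof. by move=> hG; rewrite big_nat_cond; apply: span_sum => i /andP [/hG]. Qed.

Lemma spanS (P Q : pred (seq gen)) v : (forall w, P w -> Q w) -> span P v -> span Q v.
Proof.
move=> PQ [w [hw ->]]; exists w; split=> //.
by apply: sub_all hw => p /andP [-> /PQ].
Qed.

Lemma span_word (P : pred (seq gen)) w : all (gen_ok d) w -> P w -> span P (evalw s x c w).
Proof.
by move=> w_ok Pw; exists [:: (1, w)]; rewrite /= w_ok Pw big_seq1 scale1r.
Qed.

Lemma spanM (P Q S : pred (seq gen)) u v :
  (forall w1 w2, P w1 -> Q w2 -> S (w1 ++ w2)) -> span P u -> span Q v -> span S (u * v).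
Proof.
move=> PQS [wu [/all_filterP <- ->]] [wv [/all_filterP <- ->]].
rewrite big_filter mulr_suml; apply: span_sum => p /andP [p_ok Pp].
rewrite big_filter mulr_sumr; apply: span_sum => q /andP [q_ok Qq].
rewrite -scalerAl -scalerAr scalerA -evalw_cat; apply/spanZ/span_word.
  by rewrite all_cat p_ok q_ok.
exact: PQS.
Qed.

Definition inFlt m := span (fun w => nX w < m)%N.

Lemma nX_cat w1 w2 : nX (w1 ++ w2) = (nX w1 + nX w2)%N.
Proof. exact: count_cat. Qed.

Lemma F_mul a b u v : F a u -> F b v -> F (a + b) (u * v).
Proof. by apply: spanM => w1 w2 /= h1 h2; rewrite nX_cat; lia. Qed.

Lemma F_mul_Flt a b u v : F a u -> inFlt b v -> inFlt (a + b) (u * v).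
Proof. by apply: spanM => w1 w2 /= h1 h2; rewrite nX_cat; lia. Qed.

Lemma Flt_mul_F a b u v : inFlt a u -> F b v -> inFlt (a + b) (u * v).
Proof. by apply: spanM => w1 w2 /= h1 h2; rewrite nX_cat; lia. Qed.

Lemma F_le a b v : (a <= b)%N -> F a v -> F b v.
Proof. by move=> ab; apply: spanS => w /= h; lia. Qed.

Lemma F_Flt a b v : (a < b)%N -> F a v -> inFlt b v.
Proof. by move=> ab; apply: spanS => w /= h; lia. Qed.

Lemma Flt_F a v : inFlt a v -> F a v.
Proof. by apply: spanS => w /= h; lia. Qed.

Lemma F_1 : F 0 1.
Proof. by have := @span_word (fun w => nX w <= 0)%N [::] isT isT; rewrite /evalw big_nil. Qed.

Lemma F_gen g : gen_ok d g -> F (isX g) (evalg s x c g).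
Proof.
move=> g_ok; have := @span_word (fun w => nX w <= isX g)%N [:: g].
by rewrite /evalw big_seq1 /= g_ok /nX /= addn0; apply.
Qed.

Lemma F_x i : (1 <= i <= d)%N -> F 1 (x i). Proof. exact: (@F_gen (GX i)). Qed.
Lemma F_c i : (1 <= i <= d)%N -> F 0 (c i). Proof. exact: (@F_gen (GC i)). Qed.
Lemma F_s i : (1 <= i < d)%N -> F 0 (s i). Proof. exact: (@F_gen (GS i)). Qed.

Lemma F_pow n v : F 1 v -> F n (v ^+ n).
Proof.
move=> Fv; elim: n => [|n IH]; first by rewrite expr0; apply: F_1.
by rewrite exprSr -addn1; apply: F_mul.
Qed.

Lemma F_xpow n i : (1 <= i <= d)%N -> F n (x i ^+ n).
Proof. by move=> hi; apply/F_pow/F_x. Qed.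

Lemma F_mul0 u v : F 0 u -> F 0 v -> F 0 (u * v).
Proof. exact: F_mul. Qed.

Definition eqmodF m u v := inFlt m (u - v).

Lemma eqmodF_refl m u : eqmodF m u u.
Proof. by rewrite /eqmodF subrr; apply: span0. Qed.

Lemma eqmodF_trans m u v w : eqmodF m u v -> eqmodF m v w -> eqmodF m u w.
Proof. by move=> uv vw; have := spanD uv vw; rewrite addrA subrK. Qed.

Lemma eqmodF_add m u1 v1 u2 v2 :
  eqmodF m u1 v1 -> eqmodF m u2 v2 -> eqmodF m (u1 + u2) (v1 + v2).
Proof. by move=> h1 h2; have := spanD h1 h2; rewrite /eqmodF opprD addrACA. Qed.

Lemma eqmodF_le m n u v : (m <= n)%N -> eqmodF m u v -> eqmodF n u v.
Proof. by move=> mn; apply: spanS => w /= h; lia. Qed.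

Lemma eqmodF_mulr m k u v w : eqmodF m u v -> F k w -> eqmodF (m + k) (u * w) (v * w).
Proof. by rewrite /eqmodF -mulrBl; apply: Flt_mul_F. Qed.

Lemma eqmodF_mull m k u v w : F k w -> eqmodF m u v -> eqmodF (k + m) (w * u) (w * v).
Proof. by rewrite /eqmodF -mulrBr; apply: F_mul_Flt. Qed.

Lemma eqmodF_addr m u v : inFlt m v -> eqmodF m (u + v) u.
Proof. by rewrite /eqmodF addrC addKr. Qed.

Lemma eqmodF_sum_nat m a n (G H : nat -> A) :
  (forall k, (a <= k < n)%N -> eqmodF m (G k) (H k)) ->
  eqmodF m (\sum_(a <= k < n) G k) (\sum_(a <= k < n) H k).
Proof. by move=> GH; rewrite /eqmodF -sumrB; apply: span_sum_nat. Qed.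

Lemma eqmodF_expand u e n : F 1 u -> F 0 e ->
  eqmodF n.-1 ((u + e) ^+ n) (u ^+ n + \sum_(0 <= k < n) u ^+ k * e * u ^+ (n.-1 - k)).
Proof.
move=> Fu Fe; elim: n => [|n IH].
  by rewrite big_geq // addr0 !expr0; apply: eqmodF_refl.
case: n IH => [|n] IH.
  by rewrite big_nat1 !expr1 !expr0 mulr1 mul1r; apply: eqmodF_refl.
set S := \sum_(0 <= k < n.+1) u ^+ k * e * u ^+ (n.+1.-1 - k).
have -> : \sum_(0 <= k < n.+2) u ^+ k * e * u ^+ (n.+2.-1 - k) = S * u + u ^+ n.+1 * e.
  rewrite big_nat_recr //= subnn expr0 mulr1 mulr_suml; congr (_ + _).
  apply: eq_big_nat => k hk; have -> : (n.+2.-1 - k = (n.+1.-1 - k).+1)%N by lia.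
  by rewrite exprSr mulrA.
rewrite exprSr /=.
apply: (@eqmodF_trans _ _ ((u ^+ n.+1 + S) * (u + e))).
  by have := eqmodF_mulr IH (spanD Fu (F_le (leq0n 1) Fe)); rewrite addn1.
apply: (@eqmodF_trans _ _ (u ^+ n.+2 + (S * u + u ^+ n.+1 * e) + S * e)); last first.
  apply: eqmodF_addr; rewrite /S mulr_suml; apply: span_sum_nat => k hk.
  apply: (@F_Flt (k + 0 + (n - k) + 0)); first lia.
  by apply: F_mul => //; apply: F_mul; [apply: F_mul; [apply: F_pow|] | apply: F_pow].
suff -> : (u ^+ n.+1 + S) * (u + e) = u ^+ n.+2 + (S * u + u ^+ n.+1 * e) + S * e.
  exact: eqmodF_refl.
by rewrite mulrDl !mulrDr [u ^+ n.+2]exprSr !addrA; congr (_ + _); rewrite addrAC.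
Qed.

Lemma F_prod_s r : all (fun k => 1 <= k < d)%N r -> F 0 (\prod_(k <- r) s k).
Proof.
move=> /all_filterP <-; rewrite big_filter.
by apply: (big_ind (F 0)); [apply: F_1 | apply: F_mul0 | apply: F_s].
Qed.

Lemma F_tr p q : (1 <= p <= d)%N -> (1 <= q <= d)%N -> F 0 (tr s p q).
Proof.
have F_tw p' q' : (1 <= p')%N -> (q' <= d)%N -> F 0 (tw s p' q').
  move=> hp hq; rewrite /tw; apply: F_mul0; apply: F_prod_s; apply/allP => k.
    by rewrite mem_iota => /andP [? ?]; lia.
  by rewrite mem_rev mem_iota => /andP [? ?]; lia.
move=> /andP [p1 pd] /andP [q1 qd]; rewrite /tr.
case: ifP => _; first exact: F_tw.
by case: ifP => _; [apply: F_tw | apply: F_1].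
Qed.

Lemma F_1cc i : (1 <= i < d)%N -> F 0 (1 + c i * c i.+1).
Proof. by move=> hi; apply: spanD; [apply: F_1 | apply: F_mul0; apply: F_c; lia]. Qed.

Section Relations.
Variable l : nat.
Hypothesis l_gt0 : (1 <= l)%N.

Definition pair0_term i j a :=
  x i ^+ a * x j ^+ (l.-1 - a) * tr s i j
  + x i ^+ a * (- x j) ^+ (l.-1 - a) * tr s i j * (c i * c j).

Definition pair0 i j := \sum_(0 <= a < l) pair0_term i j a.

Lemma hterm_pair i j (al : {ffun 'I_2 -> bool}) :
  hterm x l (As := [:: i; j]) al 0 =
  \sum_(0 <= a < l) x i ^+ a * ((-1) ^+ al ord0 * x j) ^+ (l.-1 - a).
Proof.
rewrite /hterm /= sum_ffun2.
set N := (1 * l.-1 + 0)%N.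
have -> : l = N.+1 by rewrite /N mul1n addn0 prednK.
rewrite big_mkord -/N; apply: eq_bigr => a _.
have ha := ltn_ord a.
rewrite (big_pred1 (inord (N - a))); last first.
  move=> b; rewrite /= !big_ord_recr big_ord0 /= !ffunE /= add0n.
  rewrite -(inj_eq val_inj) /= inordK; last lia.
  by have hb := ltn_ord b; apply/eqP/eqP => h; lia.
rewrite !big_ord_recr big_ord0 /= !ffunE /= inordK; last lia.
rewrite mul1r /epsA /= !big_mkcond !big_ord_recr !big_ord0 /= expr0 mul1r.
rewrite big_mkcond !big_ord_recr big_ord0 /=.
have -> : widen_ord (leqnSn 1) ord_max = ord0 :> 'I_2 by apply: val_inj.
by rewrite add0n addn0.
Qed.

Lemma Ar_pair i j : Ar s x c l [:: i; j] 0 = pair0 i j.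
Proof.
rewrite /Ar /=.
have absE a b : @absal [:: i; j] (ffun2 a b) = (a + b)%N.
  by rewrite /absal /= !big_ord_recr big_ord0 !ffunE.
have tauE a b : @tau R A [:: i; j] (ffun2 a b) = (-1) ^+ ((a + b)./2 + (a + 2 * b))%N.
  by rewrite /tau absE /= !big_ord_recr big_ord0 !ffunE /= mul1n.
have calphaE a b : calpha c (As := [:: i; j]) (ffun2 a b) =
    (if a then c i else 1) * (if b then c j else 1).
  by rewrite /calpha /= !big_ord_recr big_ord0 !ffunE /= mul1r.
rewrite sum_ffun2_bool !absE /= !tauE !calphaE /= !hterm_pair // !ffunE /=.
rewrite /cycA /= big_ord_recr big_ord0 /= mul1r.
rewrite -[(-1) ^+ (1 + _)]signr_odd /= expr0 expr1 mulN1r mul1r !mulr1 addr0 add0r.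
by rewrite /pair0 big_split /= !mul1r !mulr_suml addrC.
Qed.

Lemma y_pair0 i : y s x c l i = \sum_(1 <= j < i) pair0 i j.
Proof. by apply: eq_big_nat => j _; apply: Ar_pair. Qed.

Lemma F_pair0 i j : (1 <= i <= d)%N -> (1 <= j <= d)%N -> F l.-1 (pair0 i j).
Proof.
move=> hi hj; apply: span_sum_nat => a ha; rewrite /pair0_term.
apply: (@F_le (a + (l.-1 - a) + 0 + 0)%N); first lia.
apply: spanD; first by rewrite addn0; apply: F_mul; [apply: F_mul; apply: F_xpow | apply: F_tr].
apply: F_mul; last by apply: F_mul0; apply: F_c.
by apply: F_mul; [apply: F_mul; [apply: F_xpow | apply/F_pow/spanN/F_x] | apply: F_tr].
Qed.

Variable b : nat -> R.
Hypothesis rels : Sf_rels s x c l d b.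
Hypothesis b_parity : forall k, (k < l)%N -> odd k != odd l -> b k = 0.

Local Ltac from_rels := by case: rels => [? [? [? [? [? [? [? [? [? [? [? [? ?]]]]]]]]]]]].

Let s_invol : forall i, (1 <= i < d)%N -> s i * s i = 1.
Proof. from_rels. Qed.

Let s_braid : forall i, (1 <= i)%N -> (i.+1 < d)%N ->
  s i * s i.+1 * s i = s i.+1 * s i * s i.+1.
Proof. from_rels. Qed.

Let s_far : forall i j, (1 <= i < d)%N -> (1 <= j < d)%N -> (i.+1 < j)%N ->
  s i * s j = s j * s i.
Proof. from_rels. Qed.

Let xc_anti : forall i, (1 <= i <= d)%N -> x i * c i = - (c i * x i).
Proof. from_rels. Qed.

Let xc_comm : forall i j, (1 <= i <= d)%N -> (1 <= j <= d)%N -> i != j ->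
  x i * c j = c j * x i.
Proof. from_rels. Qed.

Let sc_shift : forall i, (1 <= i < d)%N -> s i * c i = c i.+1 * s i.
Proof. from_rels. Qed.

Let sc_comm : forall i j, (1 <= i < d)%N -> (1 <= j <= d)%N -> j != i -> j != i.+1 ->
  s i * c j = c j * s i.
Proof. from_rels. Qed.

Let sx_rel : forall i, (1 <= i < d)%N -> s i * x i = x i.+1 * s i - 1 - c i * c i.+1.
Proof. from_rels. Qed.

Let sx_comm : forall i j, (1 <= i < d)%N -> (1 <= j <= d)%N -> j != i -> j != i.+1 ->
  s i * x j = x j * s i.
Proof. from_rels. Qed.

Let f_x1 : x 1 ^+ l + \sum_(k < l) b k *: x 1 ^+ k = 0.
Proof. from_rels. Qed.

Lemma s_conj_c i : (1 <= i < d)%N -> s i * c i * s i = c i.+1.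
Proof. by move=> hi; rewrite sc_shift // -mulrA s_invol // mulr1. Qed.

Lemma s_conj_cj i j : (1 <= i < d)%N -> (1 <= j <= d)%N -> j != i -> j != i.+1 ->
  s i * c j * s i = c j.
Proof. by move=> *; rewrite sc_comm // -mulrA s_invol // mulr1. Qed.

Lemma s_c_succ i : (1 <= i < d)%N -> s i * c i.+1 = c i * s i.
Proof. by move=> hi; rewrite -s_conj_c // !mulrA s_invol // mul1r. Qed.

Lemma c_xpow i m : (1 <= i <= d)%N -> c i * x i ^+ m = (- x i) ^+ m * c i.
Proof.
move=> hi; elim: m => [|m IH]; first by rewrite !expr0 mulr1 mul1r.
by rewrite !exprSr mulrA IH -!mulrA mulNr xc_anti // opprK.
Qed.

Lemma c_xpow_comm i j m : (1 <= i <= d)%N -> (1 <= j <= d)%N -> i != j ->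
  c j * x i ^+ m = x i ^+ m * c j.
Proof. by move=> hi hj ij; apply/commrX; rewrite /GRing.comm xc_comm. Qed.

Lemma s_conjM i u v : (1 <= i < d)%N ->
  s i * (u * v) * s i = (s i * u * s i) * (s i * v * s i).
Proof. by move=> hi; rewrite !mulrA -(mulrA (s i * u) (s i) (s i)) s_invol // mulr1. Qed.

Lemma s_conjX i w k : (1 <= i < d)%N -> (s i * w * s i) ^+ k = s i * w ^+ k * s i.
Proof.
move=> hi; elim: k => [|k IH]; first by rewrite !expr0 mulr1 s_invol.
by rewrite exprSr IH -s_conjM // -exprSr.
Qed.

Lemma tw_conj j n : (1 <= j <= n)%N -> (n.+1 < d)%N ->
  s n.+1 * tw s j n.+1 * s n.+1 = tw s j n.+2.
Proof.
move=> /andP [hj hjn] hn; rewrite /tw /=.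
have -> : (n.+1 - j = (n - j) + 1)%N by lia.
have -> : (n.+2 - j = (n - j) + 2)%N by lia.
have jnE : (j + (n - j) = n)%N by lia.
rewrite !iotaD jnE !rev_cat /= !big_cat /= !big_cons !big_nil !mulr1.
set P := \prod_(k <- iota j (n - j)) s k.
set Q := \prod_(k <- rev (iota j (n - j))) s k.
have s_far_iota k : k \in iota j (n - j) -> GRing.comm (s n.+1) (s k).
  by rewrite mem_iota => /andP [? ?]; rewrite /GRing.comm [RHS]s_far //; lia.
have sP : GRing.comm (s n.+1) P by rewrite /P big_seq; apply: commr_prod.
have sQ : GRing.comm (s n.+1) Q.
  by rewrite /Q big_seq; apply: commr_prod => k; rewrite mem_rev; apply: s_far_iota.
transitivity (P * (s n.+1 * s n * s n.+1) * Q).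
  by rewrite !mulrA sP -!mulrA -sQ !mulrA.
rewrite -s_braid; [by rewrite !mulrA | lia | lia].
Qed.

Lemma s_xpow_eqmodF i k : (1 <= i < d)%N -> eqmodF k (s i * x i ^+ k) (x i.+1 ^+ k * s i).
Proof.
move=> hi; rewrite /eqmodF; elim: k => [|k IH].
  by rewrite !expr0 mulr1 mul1r subrr; apply: span0.
have -> : s i * x i ^+ k.+1 - x i.+1 ^+ k.+1 * s i =
    (s i * x i ^+ k - x i.+1 ^+ k * s i) * x i + x i.+1 ^+ k * (s i * x i - x i.+1 * s i).
  by rewrite mulrBl mulrBr !mulrA addrA subrK !exprSr !mulrA.
rewrite -addn1; apply: spanD; first by apply: Flt_mul_F => //; apply: F_x; lia.
apply: (@F_Flt (k + 0)); first lia.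
apply: F_mul; first by apply: F_xpow; lia.
have -> : s i * x i - x i.+1 * s i = - (1 + c i * c i.+1).
  by rewrite sx_rel // addrAC (addrAC (x i.+1 * s i)) subrr add0r opprD.
exact/spanN/F_1cc.
Qed.

Lemma s_conj_xpow i k : (1 <= i < d)%N -> eqmodF k (s i * x i ^+ k * s i) (x i.+1 ^+ k).
Proof.
move=> hi; rewrite /eqmodF.
have -> : s i * x i ^+ k * s i - x i.+1 ^+ k = (s i * x i ^+ k - x i.+1 ^+ k * s i) * s i.
  by rewrite mulrBl -(mulrA _ (s i)) s_invol // mulr1.
by have := Flt_mul_F (s_xpow_eqmodF k hi) (F_s hi); rewrite addn0.
Qed.

Lemma s_conj_monomial i a m w q :
  (1 <= i < d)%N -> GRing.comm (s i) w -> F m w -> F 0 q ->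
  eqmodF (a + m) (s i * (x i ^+ a * w * q) * s i) (x i.+1 ^+ a * w * (s i * q * s i)).
Proof.
move=> hi sw Fw Fq; rewrite /eqmodF.
have -> : s i * (x i ^+ a * w * q) * s i - x i.+1 ^+ a * w * (s i * q * s i) =
    (s i * x i ^+ a - x i.+1 ^+ a * s i) * w * q * s i.
  rewrite !mulrBl !mulrA -(mulrA (x i.+1 ^+ a) (s i) w) sw !mulrA.
  by congr (_ - _); rewrite !mulrA.
rewrite -(addn0 (a + m)%N) -(addn0 (a + m + 0)%N).
apply: Flt_mul_F; last exact: F_s.
by apply: Flt_mul_F => //; apply: Flt_mul_F => //; apply: s_xpow_eqmodF.
Qed.

Lemma s_conj_pair0 n j : (1 <= j <= n)%N -> (n.+1 < d)%N ->
  eqmodF l.-1 (s n.+1 * pair0 n.+1 j * s n.+1) (pair0 n.+2 j).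
Proof.
move=> hj hn; have hi : (1 <= n.+1 < d)%N by lia.
have hjd : (1 <= j <= d)%N by lia.
have trE : tr s n.+1 j = tw s j n.+1 by rewrite /tr ifF ?ifT //; lia.
have trE' : tr s n.+2 j = tw s j n.+2 by rewrite /tr ifF ?ifT //; lia.
have F_tw : F 0 (tw s j n.+1) by rewrite -trE; apply: F_tr; lia.
have sx : GRing.comm (s n.+1) (x j) by apply: sx_comm => //; lia.
rewrite /pair0 mulr_sumr mulr_suml; apply: eqmodF_sum_nat => a ha.
apply: (@eqmodF_le (a + (l.-1 - a))%N); first lia.
rewrite /pair0_term mulrDr mulrDl trE trE'; apply: eqmodF_add.
  rewrite -tw_conj //; apply: s_conj_monomial => //; first exact: commrX.
  exact: F_xpow.
have cE : s n.+1 * (tw s j n.+1 * (c n.+1 * c j)) * s n.+1 = tw s j n.+2 * (c n.+2 * c j).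
  rewrite (s_conjM (tw s j n.+1)) // (s_conjM (c n.+1)) //.
  by rewrite tw_conj // s_conj_c // s_conj_cj //; lia.
rewrite -!(mulrA _ (tw s j _)) -cE; apply: s_conj_monomial => //.
- exact/commrX/commrN.
- exact/F_pow/spanN/F_x.
- by apply: F_mul0 => //; apply: F_mul0; apply: F_c; lia.
Qed.

Lemma tr_succ i : tr s i.+1 i = s i.
Proof.
rewrite /tr ifF ?ifT //; last by lia.
by rewrite /tw subSnn subnn /= big_cons !big_nil !mulr1.
Qed.

Lemma pair0_succ i : (1 <= i < d)%N ->
  eqmodF l.-1
    (\sum_(0 <= k < l) (s i * x i * s i) ^+ k * ((1 + c i * c i.+1) * s i)
                        * (s i * x i * s i) ^+ (l.-1 - k))
    (pair0 i.+1 i).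
Proof.
move=> hi; have hid : (1 <= i <= d)%N by lia.
have hi1 : (1 <= i.+1 <= d)%N by lia.
apply: eqmodF_sum_nat => k hk; rewrite !s_conjX //.
set m := (l.-1 - k)%N.
have -> : s i * x i ^+ k * s i * ((1 + c i * c i.+1) * s i) * (s i * x i ^+ m * s i)
    = (s i * x i ^+ k * s i) * ((1 + c i * c i.+1) * x i ^+ m * s i).
  rewrite -!mulrA; congr (_ * (_ * (_ * _))).
  by rewrite !mulrA -(mulrA _ (s i) (s i)) s_invol // mulr1.
apply: (@eqmodF_trans _ _ (x i.+1 ^+ k * ((1 + c i * c i.+1) * x i ^+ m * s i))).
  apply: (@eqmodF_le (k + m)); first by rewrite /m; lia.
  apply: eqmodF_mulr; first exact: s_conj_xpow.
  by have := F_mul (F_mul (F_1cc hi) (F_xpow m hid)) (F_s hi); rewrite add0n addn0.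
suff -> : x i.+1 ^+ k * ((1 + c i * c i.+1) * x i ^+ m * s i) = pair0_term i.+1 i k.
  exact: eqmodF_refl.
have hcc : c i * c i.+1 * s i = s i * (c i.+1 * c i).
  by rewrite [RHS]mulrA s_c_succ // -[RHS]mulrA sc_shift // mulrA.
rewrite /pair0_term tr_succ !mulrDl mul1r mulrDr; congr (_ + _); first by rewrite !mulrA.
rewrite -(mulrA (c i)) c_xpow_comm //; last by rewrite neq_ltn ltnSn.
rewrite (mulrA (c i)) c_xpow // -!(mulrA (x i.+1 ^+ k * (- x i) ^+ (l.-1 - k))) -hcc.
by rewrite !mulrA.
Qed.

Lemma x_succE i : (1 <= i < d)%N -> x i.+1 = s i * x i * s i + (1 + c i * c i.+1) * s i.
Proof.
move=> hi; have -> : x i.+1 = x i.+1 * s i * s i by rewrite -mulrA s_invol // mulr1.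
by rewrite -mulrDl sx_rel // -(addrA (x i.+1 * s i)) -opprD subrK.
Qed.

Lemma x1_pow_eqmodF0 : (1 <= d)%N -> eqmodF l.-1 (x 1 ^+ l) 0.
Proof.
move=> d_gt0; rewrite /eqmodF subr0.
have -> : x 1 ^+ l = - \sum_(k < l) b k *: x 1 ^+ k by apply/eqP; rewrite -addr_eq0 f_x1.
apply/spanN/span_sum => k _.
have [k_par | k_npar] := eqVneq (odd k) (odd l); last first.
  by rewrite b_parity // scale0r; apply: span0.
apply/spanZ/(@F_Flt k); last by apply: F_xpow; lia.
have : (k : nat) != l.-1.
  by apply: contra_eqN k_par => /eqP ->; case: (l) l_gt0 => //= n _; case: odd.
by have := ltn_ord k; lia.
Qed.

Lemma xpow_eqmodF_pair0 i : (1 <= i <= d)%N ->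
  eqmodF l.-1 (x i ^+ l) (\sum_(1 <= j < i) pair0 i j).
Proof.
case: i => [//|n]; elim: n => [|n IH] hn.
  by rewrite big_geq //; apply: x1_pow_eqmodF0; lia.
have hi : (1 <= n.+1 < d)%N by lia.
have hid : (1 <= n.+1 <= d)%N by lia.
have Fu : F 1 (s n.+1 * x n.+1 * s n.+1).
  by have := F_mul (F_mul (F_s hi) (F_x hid)) (F_s hi); rewrite add0n addn0.
have Fe : F 0 ((1 + c n.+1 * c n.+2) * s n.+1).
  by apply: F_mul0; [apply: F_1cc | apply: F_s].
rewrite x_succE //; apply: eqmodF_trans (eqmodF_expand l Fu Fe) _.
rewrite s_conjX // big_nat_recr //=; apply: eqmodF_add; last exact: pair0_succ.
apply: (@eqmodF_trans _ _ (s n.+1 * (\sum_(1 <= j < n.+1) pair0 n.+1 j) * s n.+1)).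
  by have := eqmodF_mulr (eqmodF_mull (F_s hi) (IH hid)) (F_s hi); rewrite add0n addn0.
by rewrite mulr_sumr mulr_suml; apply: eqmodF_sum_nat => j hj; apply: s_conj_pair0; lia.
Qed.

End Relations.
End Filtration.

Theorem mainTheorem7 (R : comPzRingType) (l d : nat) (b : nat -> R) :
  (1 <= l)%N -> (1 <= d)%N ->
  (forall k, (k < l)%N -> odd k != odd l -> b k = 0) ->
  forall (A : algType R) (s x c : nat -> A),
  Sf_rels s x c l d b ->
  forall i, (1 <= i <= d)%N ->
    inF s x c d l.-1 (x i ^+ l) /\
    inSpan s x c d (fun w => (nX w).+2 <= l)%N (x i ^+ l - y s x c l i).
Proof.
move=> l_gt0 _ b_parity A s x c rels i hi.
have x_pow := xpow_eqmodF_pair0 l_gt0 rels b_parity hi.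
rewrite y_pair0 //; split; last by apply: spanS x_pow => w /=; lia.
rewrite -(subrK (\sum_(1 <= j < i) pair0 s x c l i j) (x i ^+ l)).
apply: spanD; first exact: Flt_F.
by apply: span_sum_nat => j hj; apply: F_pair0; lia.
Qed.
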